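(* Let $k\geq 4$ and let $\alpha>0$ be sufficiently small. There exist infinitely many integers $N\geq 1$ and sets $A\subseteq \{1,2,\dots,N\}$ with $|A|\geq \alpha N$ such that $A$ contains no more than \[\exp\bigl(-c\log^2(2/\alpha)\bigr)N^{k-1}\] solutions $(x_1,\dots,x_k)\in A^k$ to the equation $x_1+\cdots+x_{k-1}=(k-1)x_k$, where $c>0$ is a constant. *)

From mathcomp Require Import all_boot.
From Stdlib Require Import Reals.

Unset Printing Implicit Defensive.

(* A subset of {1,...,N} is represented as A : {set 'I_N.+1} with 0 \notin A. *)

Definition nsol (k N : nat) (A : {set 'I_N.+1}) : nat :=
  #|[set p : {ffun 'I_k.-1 -> 'I_N.+1} * 'I_N.+1 |
       [forall i, p.1 i \in A] && (p.2 \in A) &&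
       ((\sum_(i < k.-1) (p.1 i : nat))%N == (k.-1 * p.2)%N)]|.

(* A point of A, a subset of {1, ..., N} with N = n (k-1) T and
   n = ((k-1) m)^d, is x = enc(v) (k-1) T + t + 1, where enc(v) reads v in [0, m)^d as the
   digits of a number in base (k-1) m, v lies on a fixed sphere |v|^2 = r, and t < T is a free
   offset.  Adding k-1 points produces no carry, neither from the offsets into the digits nor
   between digits, so x_1 + ... + x_(k-1) = (k-1) y forces v_1 + ... + v_(k-1) = (k-1) w, and
   since all these points lie on one sphere, strict convexity gives v_i = w.  Hence a solution
   lives in a single block of (k-1) T consecutive integers, so there are at most
   (n+1) ((k-1) T)^(k-1) <= N^(k-1) / n solutions.  With m = (k-1)^d and r chosen by pigeonhole,
   A has density at least 1 / (2 d (k-1)^(3d+1)); taking d as large as this allows for alpha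
   gives n >= (k-1)^(d^2) >= exp (log^2 (2/alpha) / (100 log (k-1))), and T is arbitrary. *)

From mathcomp Require Import all_boot.
From Stdlib Require Import Reals.
From Stdlib Require Import Lra Classical.
(* Importing Reals rebinds [_ ^ _] on nat to [Nat.pow]; re-importing ssrnat restores [expn]. *)
Set Warnings "-notation-overridden".
From mathcomp Require Import ssrnat zify.

Definition from_digits (B : nat) {d} (a : 'I_d -> nat) : nat :=
  \sum_(i < d) a i * B ^ i.

Lemma from_digits_recl B d (a : 'I_d.+1 -> nat) :
  from_digits B a = a ord0 + B * from_digits B (fun i => a (lift ord0 i)).
Proof.
rewrite /from_digits big_ord_recl expn0 muln1 big_distrr; congr (_ + _).
by apply: eq_bigr => i _; rewrite /= /bump /= add1n expnS mulnCA.
Qed.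

Lemma from_digits_lt B d (a : 'I_d -> nat) :
  (forall i, a i < B) -> from_digits B a < B ^ d.
Proof.
elim: d a => [|d IH] a aB; first by rewrite /from_digits big_ord0.
rewrite from_digits_recl expnS; set X := from_digits B _.
have X_lt : X < B ^ d := IH _ (fun i => aB (lift ord0 i)).
apply: (@leq_trans (B * X.+1)); first by rewrite mulnS ltn_add2r aB.
by rewrite leq_mul2l X_lt orbT.
Qed.

Lemma from_digits_inj B d (a b : 'I_d -> nat) :
  (forall i, a i < B) -> (forall i, b i < B) ->
  from_digits B a = from_digits B b -> a =1 b.
Proof.
elim: d a b => [|d IH] a b aB bB; first by move=> _ [].
have B_gt0 : 0 < B by apply: leq_ltn_trans (aB ord0).
rewrite !from_digits_recl => eq_ab.
have eq0 : a ord0 = b ord0.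
  have := congr1 (modn^~ B) eq_ab.
  by rewrite ![_ + B * _]addnC ![B * _]mulnC !modnMDl !modn_small.
have {}IH := IH _ _ (fun i => aB (lift ord0 i)) (fun i => bB (lift ord0 i)).
move: eq_ab; rewrite eq0 => /addnI /eqP; rewrite eqn_pmul2l // => /eqP /IH eq_tail i.
by case: (unliftP ord0 i) => [j ->|->].
Qed.

Lemma sum_from_digits B {d K} (a : 'I_K -> 'I_d -> nat) :
  \sum_(j < K) from_digits B (a j) = from_digits B (fun l => \sum_(j < K) a j l).
Proof. by rewrite /from_digits exchange_big; apply: eq_bigr => l _; rewrite big_distrl. Qed.

Lemma muln_from_digits B {d} K (a : 'I_d -> nat) :
  K * from_digits B a = from_digits B (fun l => K * a l).
Proof. by rewrite /from_digits big_distrr; apply: eq_bigr => l _; rewrite /= mulnA. Qed.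

Definition sqnorm {d} (a : 'I_d -> nat) : nat := \sum_(l < d) a l ^ 2.

Lemma sqrn_add_dist a b : a ^ 2 + b ^ 2 = 2 * (a * b) + ((a - b) ^ 2 + (b - a) ^ 2).
Proof.
wlog le_ab : a b / a <= b.
  by move=> sym; case: (leqP a b) => [/sym //|/ltnW /sym]; lia.
have [c ->] : exists c, b = a + c by exists (b - a); lia.
have -> : a - (a + c) = 0 by lia.
rewrite addKn sqrnD; lia.
Qed.

Lemma sphere_mean_eq K d (v : 'I_K -> 'I_d -> nat) (w : 'I_d -> nat) :
  (forall l, \sum_(j < K) v j l = K * w l) ->
  (forall j, sqnorm (v j) = sqnorm w) -> forall j, v j =1 w.
Proof.
move=> sum_v norm_v.
pose D j l := (v j l - w l) ^ 2 + (w l - v j l) ^ 2.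
have cross : \sum_(j < K) \sum_(l < d) v j l * w l = K * sqnorm w.
  rewrite exchange_big /sqnorm big_distrr /=; apply: eq_bigr => l _.
  by rewrite -big_distrl /= sum_v -mulnA mulnn.
have norms : \sum_(j < K) \sum_(l < d) (v j l ^ 2 + w l ^ 2) = 2 * (K * sqnorm w).
  transitivity (\sum_(j < K) (sqnorm (v j) + sqnorm w)).
    by apply: eq_bigr => j _; rewrite big_split.
  under eq_bigr => j _ do rewrite norm_v.
  by rewrite sum_nat_const card_ord; lia.
have expand : \sum_(j < K) \sum_(l < d) (v j l ^ 2 + w l ^ 2) =
    2 * \sum_(j < K) \sum_(l < d) v j l * w l + \sum_(j < K) \sum_(l < d) D j l.
  rewrite big_distrr -big_split; apply: eq_bigr => j _ /=.
  by rewrite big_distrr -big_split; apply: eq_bigr => l _; apply: sqrn_add_dist.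
have : \sum_(j < K) \sum_(l < d) D j l == 0 by apply/eqP; lia.
rewrite sum_nat_eq0 => /forallP D0 j l.
move: (D0 j); rewrite sum_nat_eq0 => /forallP /(_ l) /=.
rewrite /D addn_eq0 !expn_eq0 !subn_eq0 !andbT => /andP [le_vw le_wv].
by apply/eqP; rewrite eqn_leq le_vw le_wv.
Qed.

Lemma exists_large_fiber (T : finType) n (f : T -> 'I_n.+1) :
  exists i, #|T| <= n.+1 * #|[set x | f x == i]|.
Proof.
pose fiber i := #|[set x | f x == i]|.
have [i _ max_i] := @arg_maxnP _ ord0 xpredT fiber isT.
exists i.
have -> : #|T| = \sum_(j < n.+1) fiber j.
  rewrite -sum1_card (partition_big f xpredT) //=; apply: eq_bigr => j _.
  by rewrite /fiber -sum1_card; apply: eq_bigl => x; rewrite inE.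
by rewrite -[in X in _ <= X * _](card_ord n.+1) -sum_nat_const; apply: leq_sum => j _; apply: max_i.
Qed.

Definition sphere d m r : {set {ffun 'I_d -> 'I_m}} :=
  [set v : {ffun 'I_d -> 'I_m} | sqnorm (val \o v) == r].

Lemma sqnorm_le d m (v : {ffun 'I_d -> 'I_m}) : sqnorm (val \o v) <= d * m * m.
Proof.
rewrite -mulnA -[d in d * _]card_ord -sum_nat_const.
by apply: leq_sum => l _; rewrite /= -mulnn leq_mul // ltnW.
Qed.

Lemma exists_large_sphere d m : exists r, m ^ d <= (d * m * m).+1 * #|sphere d m r|.
Proof.
pose f (v : {ffun 'I_d -> 'I_m}) : 'I_(d * m * m).+1 := inord (sqnorm (val \o v)).
have [r large_r] := @exists_large_fiber _ _ f.
exists (val r); rewrite card_ffun !card_ord in large_r.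
suff -> : sphere d m r = [set v | f v == r] by [].
apply/setP => v; rewrite !inE -(inj_eq val_inj) /= inordK // ltnS; exact: sqnorm_le.
Qed.

Lemma nsol_le_blocks K n M (A : {set 'I_(n * M).+1}) : 0 < K -> 0 < M ->
  (forall (xs : {ffun 'I_K -> 'I_(n * M).+1}) (y : 'I_(n * M).+1),
     (forall i, xs i \in A) -> y \in A -> \sum_(i < K) (xs i : nat) = K * y ->
     forall i, xs i %/ M = y %/ M) ->
  nsol K.+1 (n * M) A <= n.+1 * M ^ K.
Proof.
move=> K_gt0 M_gt0 same_block.
(* A solution is determined by the block of y and the offsets of the x_i in that block. *)
pose h (p : {ffun 'I_K -> 'I_(n * M).+1} * 'I_(n * M).+1) :=
  (inord (p.2 %/ M) : 'I_n.+1, [ffun i => Ordinal (ltn_pmod (p.1 i) M_gt0)]).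
rewrite /nsol -(card_in_imset (f := h)); last first.
  move=> p q; rewrite !inE => /andP [/andP [/forallP pA p2A] /eqP p_sum].
  move=> /andP [/andP [/forallP qA q2A] /eqP q_sum] eq_h.
  have block_le (y : 'I_(n * M).+1) : y %/ M < n.+1.
    rewrite ltn_divLR // mulSn addnC; apply: leq_trans (ltn_ord y) _.
    by rewrite -addn1 leq_add2l.
  have eq_block : p.2 %/ M = q.2 %/ M.
    by have := congr1 (val \o fst) eq_h; rewrite /= !inordK ?block_le.
  have eq1 : p.1 = q.1.
    apply/ffunP => i; apply: val_inj.
    have := congr1 (fun z : 'I_n.+1 * {ffun 'I_K -> 'I_M} => val (z.2 i)) eq_h.
    rewrite /= !ffunE /= => eq_mod.
    rewrite (divn_eq (p.1 i) M) (divn_eq (q.1 i) M) eq_mod.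
    by rewrite (same_block _ _ pA p2A p_sum) (same_block _ _ qA q2A q_sum) eq_block.
  have eq2 : p.2 = q.2.
    by apply: val_inj; apply/eqP; rewrite -(eqn_pmul2l K_gt0) -p_sum -q_sum eq1.
  exact: injective_projections eq1 eq2.
apply: leq_trans (max_card _) _.
by rewrite card_prod card_ffun !card_ord.
Qed.

Lemma ltn_sum_const K c (a : 'I_K -> nat) : 0 < K -> (forall i, a i < c) ->
  \sum_(i < K) a i < K * c.
Proof.
move=> K_gt0 a_lt; have c_gt0 : 0 < c := leq_ltn_trans (leq0n _) (a_lt (Ordinal K_gt0)).
apply: (@leq_ltn_trans (\sum_(i < K) c.-1)).
  by apply: leq_sum => i _; rewrite -ltnS prednK.
by rewrite sum_nat_const card_ord ltn_pmul2l // prednK.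
Qed.

Section Behrend.

Variables K m d T : nat.
Hypotheses (K_gt1 : 1 < K) (T_gt0 : 0 < T).

Local Notation B := (K * m).
Local Notation M := (K * T).
Local Notation n := (B ^ d).

Let K_gt0 : 0 < K := ltnW K_gt1.
Let M_gt0 : 0 < M. Proof. by rewrite muln_gt0 K_gt0. Qed.

Definition behrend_point (u : {ffun 'I_d -> 'I_m} * 'I_T) : nat :=
  from_digits B (val \o u.1) * M + u.2 + 1.

Lemma digit_lt_base (v : {ffun 'I_d -> 'I_m}) l : val (v l) < B.
Proof. by apply: leq_trans (ltn_ord _) _; rewrite leq_pmull. Qed.

Lemma offset_lt (t : 'I_T) : t + 1 < M.
Proof. by rewrite addn1; apply: leq_ltn_trans (ltn_ord t) (ltn_Pmull K_gt1 T_gt0). Qed.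

Lemma behrend_point_le u : behrend_point u <= n * M.
Proof.
have enc_lt : from_digits B (val \o u.1) < n by apply: from_digits_lt => l; apply: digit_lt_base.
rewrite /behrend_point -addnA; apply: leq_trans (_ : (from_digits B (val \o u.1)).+1 * M <= _).
  by rewrite mulSnr leq_add2l ltnW // offset_lt.
by rewrite leq_mul2r enc_lt orbT.
Qed.

Lemma behrend_point_div u : behrend_point u %/ M = from_digits B (val \o u.1).
Proof. by rewrite /behrend_point -addnA divnMDl ?divn_small ?addn0 ?offset_lt. Qed.

Lemma behrend_point_inj : injective behrend_point.
Proof.
move=> u u' eq_uu'.
have eq1 : u.1 = u'.1.
  have := congr1 (divn^~ M) eq_uu'; rewrite !behrend_point_div => /from_digits_inj eq_digits.
  by apply/ffunP => l; apply: val_inj; apply: eq_digits => i; apply: digit_lt_base.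
have eq2 : u.2 = u'.2.
  by apply: val_inj; move: eq_uu'; rewrite /behrend_point eq1 => /addIn /addnI.
exact: injective_projections eq1 eq2.
Qed.

Definition behrend_set r : {set 'I_(n * M).+1} :=
  [set inord (behrend_point u) | u in setX (sphere d m r) [set: 'I_T]].

Lemma val_inord_behrend_point u :
  (inord (behrend_point u) : 'I_(n * M).+1) = behrend_point u :> nat.
Proof. by rewrite inordK // ltnS behrend_point_le. Qed.

Lemma card_behrend_set r : #|behrend_set r| = #|sphere d m r| * T.
Proof.
rewrite card_in_imset ?cardsX ?cardsT ?card_ord // => u u' _ _ /(congr1 (@nat_of_ord _)).
by rewrite !val_inord_behrend_point; apply: behrend_point_inj.
Qed.

Lemma ord0_notin_behrend_set r : ord0 \notin behrend_set r.
Proof.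
apply/imsetP => -[u _ /(congr1 (@nat_of_ord _))].
by rewrite val_inord_behrend_point /behrend_point addn1.
Qed.

Lemma behrend_sum_eq r (us : 'I_K -> {ffun 'I_d -> 'I_m} * 'I_T) u :
  (forall i, (us i).1 \in sphere d m r) -> u.1 \in sphere d m r ->
  \sum_(i < K) behrend_point (us i) = K * behrend_point u ->
  forall i, (us i).1 = u.1.
Proof.
move=> us_sph u_sph.
rewrite /behrend_point !big_split /= -big_distrl /= sum_nat_const card_ord.
set E := \sum_(i < K) _; set X := \sum_(i < K) _; set e := from_digits _ _.
rewrite muln1 !mulnDr muln1 [K * (_ * _)]mulnA => /addIn sum_eq.
have X_lt : X < M by apply: ltn_sum_const.
have t_lt : K * u.2 < M by rewrite ltn_pmul2l.
have E_eq : E = K * e.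
  by move/(congr1 (divn^~ M)): sum_eq; rewrite !divnMDl // !divn_small // !addn0.
have coords : (fun l => \sum_(i < K) val ((us i).1 l)) =1 (fun l => K * val (u.1 l)).
  apply: (@from_digits_inj B).
  - by move=> l; apply: ltn_sum_const => // i; apply: ltn_ord.
  - by move=> l; rewrite ltn_pmul2l //; exact: (ltn_ord (u.1 l)).
  rewrite -(sum_from_digits B (fun i l => val ((us i).1 l))).
  by rewrite -(muln_from_digits B K (fun l => val (u.1 l))).
move=> i; apply/ffunP => l; apply: val_inj.
apply: (@sphere_mean_eq K d (fun i l => val ((us i).1 l)) _ coords) => j.
by move: (us_sph j) u_sph; rewrite !inE => /eqP -> /eqP ->.
Qed.

Lemma nsol_behrend_set r : nsol K.+1 (n * M) (behrend_set r) <= n.+1 * M ^ K.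
Proof.
apply: nsol_le_blocks => // xs y xs_in y_in sum_eq i.
have [us us_in xs_eq] : exists2 us : 'I_K -> _, forall i, us i \in setX (sphere d m r) [set: 'I_T]
    & forall i, xs i = inord (behrend_point (us i)).
  have /fin_all_exists [us us_spec] : forall i, exists u,
      u \in setX (sphere d m r) [set: 'I_T] /\ xs i = inord (behrend_point u).
    by move=> j; have /imsetP [u u_in ->] := xs_in j; exists u.
  by exists us => j; case: (us_spec j).
have /imsetP [u u_in y_eq] := y_in.
have sph (v : {ffun 'I_d -> 'I_m} * 'I_T) :
    v \in setX (sphere d m r) [set: 'I_T] -> v.1 \in sphere d m r.
  by rewrite inE => /andP [].
rewrite xs_eq y_eq !val_inord_behrend_point !behrend_point_div.
suff -> : (us i).1 = u.1 by [].
apply: (@behrend_sum_eq r us u) => [j||]; try exact: sph.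
move: sum_eq; rewrite y_eq val_inord_behrend_point => <-.
by apply: eq_bigr => j _; rewrite xs_eq val_inord_behrend_point.
Qed.

End Behrend.

Lemma behrend_set_dense K d T r : 1 < K -> 0 < d -> 0 < T ->
  (K ^ d) ^ d <= (d * K ^ d * K ^ d).+1 * #|sphere d (K ^ d) r| ->
  (K * K ^ d) ^ d * (K * T) <= 2 * d * K ^ (3 * d + 1) * #|behrend_set K (K ^ d) d T r|.
Proof.
move=> K_gt1 d_gt0 T_gt0 large_r; rewrite card_behrend_set //.
set m := K ^ d in large_r *; set s := #|sphere d m r| in large_r *.
have m_gt0 : 0 < m by rewrite expn_gt0 (ltnW K_gt1).
have dmm_gt0 : 0 < d * m * m by rewrite !muln_gt0 d_gt0 m_gt0.
rewrite mulnA [X in _ <= X]mulnA leq_mul2r; apply/orP; right.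
rewrite -(@leq_pmul2l (m ^ d)); last by rewrite expn_gt0 m_gt0.
have -> : m ^ d * (2 * d * K ^ (3 * d + 1) * s) = 2 * (d * m * m) * s * ((K * m) ^ d * K).
  rewrite (_ : 3 * d + 1 = d + d + d + 1); last by lia.
  by rewrite expnMn !expnD expn1 -/m; lia.
apply: leq_trans (leq_mul large_r (leqnn _)) _.
by apply: leq_mul => //; apply: leq_mul => //; lia.
Qed.

Lemma block_count_mul_le x n M K : 1 < n -> 2 < K ->
  x <= n.+1 * M ^ K -> x * n <= (n * M) ^ K.
Proof.
move=> n_gt1 K_gt2 x_le; apply: leq_trans (leq_mul x_le (leqnn n)) _.
rewrite expnMn mulnAC leq_mul2r; apply/orP; right.
apply: (@leq_trans (n ^ 3)); last by rewrite leq_pexp2l // ltnW.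
by rewrite !expnS expn0 muln1 mulnC leq_mul2l; apply/orP; right; nia.
Qed.

Lemma exists_crossing (P : nat -> Prop) n : P 1 -> ~ P n.+1 ->
  exists d, 0 < d /\ P d /\ ~ P d.+1.
Proof.
move=> P1; elim: n => [|n IH] notP; first by [].
by case: (classic (P n.+1)) => [Pn|/IH]; [exists n.+1|].
Qed.

Open Scope R_scope.

Lemma INR_muln m n : INR (m * n)%N = INR m * INR n.
Proof. by rewrite mulnE mult_INR. Qed.

Lemma INR_expn m e : INR (m ^ e)%N = INR m ^ e.
Proof. by elim: e => [|e IH] //=; rewrite expnS INR_muln IH. Qed.

Lemma ln_le_ln x y : 0 < x -> x <= y -> ln x <= ln y.
Proof. by move=> x_gt0 [/(ln_increasing _ _ x_gt0)/Rlt_le|->] //; apply: Rle_refl. Qed.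

Lemma exp_le_exp x y : x <= y -> exp x <= exp y.
Proof. by move=> [/exp_increasing/Rlt_le|->] //; apply: Rle_refl. Qed.

Lemma INR_scale_le (a b q : nat) (x : R) :
  (a <= q * b)%N -> 0 <= x -> x * INR q <= 1 -> x * INR a <= INR b.
Proof.
move=> /leP/le_INR; rewrite INR_muln => a_le x_ge0 xq_le.
have b_ge0 := pos_INR b.
apply: Rle_trans (Rmult_le_compat_l _ _ _ x_ge0 a_le) _; nra.
Qed.

Lemma INR_le_inv_mul (x y n : nat) (E : R) :
  (x * n <= y)%N -> 0 < E -> E <= INR n -> INR x <= / E * INR y.
Proof.
move=> /leP/le_INR; rewrite INR_muln => xn_le E_gt0 E_le.
have x_ge0 := pos_INR x.
apply: (Rmult_le_reg_l E) => //; rewrite -Rmult_assoc Rinv_r; nra.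
Qed.

Lemma exp_sqr_ln_le (b y : R) (e : nat) : 1 < b -> 1 <= y -> y <= b ^ (10 * e) ->
  exp (/ (100 * ln b) * ln y ^ 2) <= b ^ (e * e).
Proof.
move=> b_gt1 y_ge1 y_le.
have lnb_gt0 : 0 < ln b by rewrite -ln_1; apply: ln_increasing; lra.
have lny_ge0 : 0 <= ln y by rewrite -ln_1; apply: ln_le_ln; lra.
have lny_le : ln y <= 10 * INR e * ln b.
  have -> : 10 * INR e = INR (10 * e) by rewrite INR_muln /=; lra.
  by rewrite -ln_pow; [apply: ln_le_ln|]; lra.
have sq_le : ln y ^ 2 <= (10 * INR e * ln b) ^ 2 by apply: pow_incr.
rewrite -[b ^ (e * e)]exp_ln; last by apply: pow_lt; lra.
apply: exp_le_exp; rewrite ln_pow ?INR_muln; last lra.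
apply: Rle_trans (Rmult_le_compat_l _ _ _ _ sq_le) _.
  by apply: Rlt_le; apply: Rinv_0_lt_compat; lra.
by apply: Req_le; field; lra.
Qed.

Lemma exists_behrend_dimension K alpha : (1 < K)%N -> 0 < alpha ->
  alpha * (2 * INR K ^ 4) <= 1 ->
  exists d, (0 < d)%N /\ alpha * INR (2 * d * K ^ (3 * d + 1)) <= 1 /\
            2 / alpha <= INR K ^ (10 * d).
Proof.
move=> K_gt1 alpha_gt0 alpha_le.
pose P d := alpha * INR (2 * d * K ^ (3 * d + 1)) <= 1.
have P1 : P 1%N by rewrite /P muln1 INR_muln INR_expn /=; lra.
have [D D_gt] := INR_unbounded (/ alpha).
have notP : ~ P D.+1.
  have : (D <= 2 * D.+1 * K ^ (3 * D.+1 + 1))%N.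
    have : (0 < K ^ (3 * D.+1 + 1))%N by rewrite expn_gt0 ltnW.
    nia.
  move/leP/le_INR; rewrite /P => D_le P_D.
  have := Rmult_lt_compat_l _ _ _ alpha_gt0 D_gt; rewrite Rinv_r; last lra.
  have := Rmult_le_compat_l _ _ _ (Rlt_le _ _ alpha_gt0) D_le; lra.
have [d [d_gt0 [Pd /Rnot_le_lt notPd]]] := @exists_crossing P D P1 notP.
exists d; split=> //; split=> //.
have /leP/le_INR growth : (4 * d.+1 * K ^ (3 * d.+1 + 1) <= K ^ (10 * d))%N.
  have d_lt : (d.+1 <= K ^ d)%N by apply: ltn_expl.
  have four_le : (4 <= K ^ 2)%N by rewrite (@leq_trans (2 ^ 2)) // leq_exp2r.
  apply: (@leq_trans (K ^ 2 * K ^ d * K ^ (3 * d.+1 + 1))); first by rewrite !leq_mul.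
  by rewrite -!expnD leq_pexp2l ?(ltnW K_gt1) //; lia.
rewrite -INR_expn; apply: Rle_trans growth.
have -> : (4 * d.+1 * K ^ (3 * d.+1 + 1) = 2 * (2 * d.+1 * K ^ (3 * d.+1 + 1)))%N.
  by rewrite !mulnA.
rewrite INR_muln (_ : INR 2 = 2); last by rewrite /=; lra.
apply: (Rmult_le_reg_l alpha) => //.
have -> : alpha * (2 / alpha) = 2 by field; lra.
lra.
Qed.

Theorem theorem4 :
  forall k : nat, (4 <= k)%N ->
  exists c : R, (0 < c)%R /\
  exists alpha0 : R, (0 < alpha0)%R /\
  forall alpha : R, (0 < alpha)%R -> (alpha < alpha0)%R ->
  forall M : nat, exists N : nat, (M <= N)%N /\ (1 <= N)%N /\
    exists A : {set 'I_N.+1},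
      ord0 \notin A /\
      (alpha * INR N <= INR (#|A|))%R /\
      (INR (nsol k N A) <= exp (- c * (ln (2 / alpha)) ^ 2) * (INR N) ^ k.-1)%R.
Proof.
move=> [//|K] /ltnSE K_gt2; have K_gt1 : (1 < K)%N := ltnW K_gt2.
have K_gt0 : (0 < K)%N := ltnW K_gt1.
have K_gt1R : 1 < INR K by apply: (lt_INR 1); apply/ltP.
have lnK_gt0 : 0 < ln (INR K) by rewrite -ln_1; apply: ln_increasing; lra.
have K4_ge1 : 1 <= INR K ^ 4 by apply: pow_R1_Rle; lra.
exists (/ (100 * ln (INR K))); split; first by apply: Rinv_0_lt_compat; lra.
exists (/ (2 * INR K ^ 4)); split; first by apply: Rinv_0_lt_compat; lra.
move=> alpha alpha_gt0 alpha_lt M.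
have alpha_le : alpha * (2 * INR K ^ 4) <= 1.
  by apply: Rlt_le; rewrite -(Rinv_l (2 * INR K ^ 4)); [apply: Rmult_lt_compat_r|]; lra.
have ln_arg_ge1 : 1 <= 2 / alpha.
  apply: (Rmult_le_reg_l alpha) => //.
  by rewrite Rmult_1_r (_ : alpha * (2 / alpha) = 2); [nra | field; lra].
have [d [d_gt0 [dense sparse]]] := @exists_behrend_dimension K alpha K_gt1 alpha_gt0 alpha_le.
have [r large_r] := exists_large_sphere d (K ^ d).
set n := ((K * K ^ d) ^ d)%N.
have n_gt1 : (1 < n)%N.
  by rewrite /n -expnS -expnM (@leq_trans K) // -{1}(expn1 K) leq_pexp2l // muln_gt0 d_gt0.
have T_le_N : (M.+1 <= n * (K * M.+1))%N.
  exact: leq_trans (leq_pmull _ K_gt0) (leq_pmull _ (ltnW n_gt1)).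
exists (n * (K * M.+1))%N; split; first exact: ltnW.
split; first exact: leq_trans T_le_N.
exists (behrend_set K (K ^ d) d M.+1 r); split; first exact: ord0_notin_behrend_set.
split; first by apply: INR_scale_le dense; [exact: behrend_set_dense | lra].
rewrite Ropp_mult_distr_l_reverse exp_Ropp -INR_expn.
apply: INR_le_inv_mul (exp_pos _) _.
  by apply: block_count_mul_le => //; apply: nsol_behrend_set.
apply: Rle_trans (exp_sqr_ln_le _ _ _ K_gt1R ln_arg_ge1 sparse) _.
rewrite -INR_expn; apply/le_INR/leP.
by rewrite /n expnMn -expnM leq_pmull // expn_gt0 K_gt0.
Qed.
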